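(* Let $(M,\Sigma)$ be a measurable space, $r\ge1$, and $\mu_1,\dots,\mu_r$ non-atomic countably additive finite measures on $\Sigma$. Let $S\in\Sigma$ satisfy $\prod_{i=1}^r\mu_i(S)\neq0$. Then there exist pairwise disjoint measurable sets $R^1,\dots,R^r\subseteq S$ and a permutation $(l_1,\dots,l_r)$ of $\{1,\dots,r\}$ such that for each $k$ we have $\mu_{l_k}(R^k)=\frac1r\mu_{l_k}(S)$, and for all $j>k$ we have $\mu_{l_j}(R^k)\le\frac1r\mu_{l_j}(S)$. *)

From HB Require Import structures.
From mathcomp Require Import all_boot all_order all_algebra all_fingroup.
From mathcomp Require Import all_classical all_reals all_analysis.
Set Implicit Arguments. Unset Strict Implicit. Unset Printing Implicit Defensive.
Import Order.TTheory GRing.Theory Num.Theory.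
Local Open Scope classical_set_scope.
Local Open Scope ring_scope.

Definition non_atomic d (T : measurableType d) (R : realType)
  (mu : set T -> \bar R) : Prop :=
  forall A, measurable A -> (0 < mu A)%E ->
    exists B, [/\ measurable B, B `<=` A & (0 < mu B < mu A)%E].

From HB Require Import structures.
From mathcomp Require Import all_boot all_order all_algebra all_fingroup.
From mathcomp Require Import all_classical all_reals all_analysis.
From mathcomp Require Import lra.
Set Implicit Arguments. Unset Strict Implicit. Unset Printing Implicit Defensive.
Import Order.TTheory GRing.Theory Num.Theory.
Local Open Scope classical_set_scope.
Local Open Scope ring_scope.

(* Let nu be the sum of the mu_i: a finite non-atomic measure dominating each
   mu_i, hence with measurable subsets of arbitrarily small positive mass.
   Given caps c_j >= 0 on a measurable set A, a greedy exhaustion (repeatedly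
   add to B a subset C of A \ B with mu_j(B) + nu(C) <= c_j, of at least half
   the largest possible nu-mass) produces a B below all caps to which no set of
   positive nu-mass can be added.  If no cap were attained, a subset of A \ B
   of small positive mass could still be added; so some mu_l(B) = c_l.
   With c_j = mu_j(S)/r this cuts off R^1 for l_1; removing l_1 and R^1, every
   other mu_j keeps at least (r-1)/r of mu_j(S) on S \ R^1, which is exactly
   what the next step needs, so the construction recurses. *)

Section fine_measure.
Context d (T : measurableType d) (R : realType).
Variable mu : {finite_measure set T -> \bar R}.
Implicit Types A B : set T.

Lemma fine_measureE A : measurable A -> mu A = (fine (mu A))%:E.
Proof. by move=> mA; rewrite fineK ?fin_num_measure. Qed.

Lemma fine_measure_ge0 A : 0 <= fine (mu A).
Proof. exact/fine_ge0/measure_ge0. Qed.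

Lemma fine_measure0 : fine (mu set0) = 0.
Proof. by rewrite measure0. Qed.

Lemma fine_measureU A B : measurable A -> measurable B -> A `&` B = set0 ->
  fine (mu (A `|` B)) = fine (mu A) + fine (mu B).
Proof. by move=> mA mB AB; rewrite measureU // fineD ?fin_num_measure. Qed.

Lemma fine_le_measure A B : measurable A -> measurable B -> A `<=` B ->
  fine (mu A) <= fine (mu B).
Proof.
by move=> mA mB AB; rewrite fine_le ?fin_num_measure ?le_measure ?inE.
Qed.

Lemma fine_measureD A B : measurable A -> measurable B -> A `<=` B ->
  fine (mu (B `\` A)) = fine (mu B) - fine (mu A).
Proof.
move=> mA mB AB; rewrite -[in RHS](setDUK AB) fine_measureU ?setDIK //.
  by rewrite addrC addKr.
exact: measurableD.
Qed.

End fine_measure.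

Lemma le0_of_linear_bound (R : archiRealFieldType) (x y : R) :
  (forall n : nat, n%:R * x <= y) -> x <= 0.
Proof.
move=> bnd; rewrite leNgt; apply/negP => x0.
have y0 : 0 <= y by have := bnd 0%N; rewrite mul0r.
have := bnd (Num.Def.archi_bound (y / x)).
by rewrite -ler_pdivlMr // leNgt archi_boundP // divr_ge0 // ltW.
Qed.

Section total_mass.
Context d (T : measurableType d) (R : realType) (I : finType).
Variable mu : I -> {finite_measure set T -> \bar R}.
Implicit Types A B C D : set T.

Definition total_mass A : R := \sum_i fine (mu i A).
Local Notation nu := total_mass.

Lemma total_mass0 : nu set0 = 0.
Proof. by rewrite /nu big1 // => i _; rewrite fine_measure0. Qed.

Lemma total_massU A B : measurable A -> measurable B -> A `&` B = set0 ->
  nu (A `|` B) = nu A + nu B.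
Proof.
by move=> mA mB AB; rewrite /nu -big_split; apply: eq_bigr => i _; rewrite fine_measureU.
Qed.

Lemma le_total_mass A B : measurable A -> measurable B -> A `<=` B -> nu A <= nu B.
Proof. by move=> mA mB AB; apply: ler_sum => i _; exact: fine_le_measure. Qed.

Lemma total_massD A B : measurable A -> measurable B -> A `<=` B ->
  nu (B `\` A) = nu B - nu A.
Proof.
by move=> mA mB AB; rewrite /nu -sumrB; apply: eq_bigr => i _; rewrite fine_measureD.
Qed.

Lemma fine_measure_le_total_mass i A : fine (mu i A) <= nu A.
Proof.
rewrite /nu (bigD1 i) //= lerDl; apply: sumr_ge0 => j _; exact: fine_measure_ge0.
Qed.

Hypothesis mu_non_atomic : forall i, non_atomic (mu i).

Lemma total_mass_non_atomic D : measurable D -> 0 < nu D ->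
  exists C, [/\ measurable C, C `<=` D & 0 < nu C < nu D].
Proof.
move=> mD nuD0.
have [i muiD0] : exists i, 0 < fine (mu i D).
  apply: contrapT => nD; move: nuD0; rewrite ltNge => /negP; apply.
  by apply: sumr_le0 => i _; rewrite leNgt; apply/negP => h; apply: nD; exists i.
have [C [mC CD]] : exists B, [/\ measurable B, B `<=` D & (0 < mu i B < mu i D)%E].
  by apply: mu_non_atomic => //; rewrite fine_measureE // lte_fin.
rewrite (fine_measureE _ mC) (fine_measureE _ mD) !lte_fin => /andP[C0 CD0].
exists C; split => //; apply/andP; split.
  exact: lt_le_trans C0 (fine_measure_le_total_mass i C).
rewrite -subr_gt0 -total_massD //.
by apply: lt_le_trans (fine_measure_le_total_mass i _); rewrite fine_measureD // subr_gt0.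
Qed.

Lemma total_mass_halve D : measurable D -> 0 < nu D ->
  exists C, [/\ measurable C, C `<=` D, 0 < nu C & 2 * nu C <= nu D].
Proof.
move=> mD nuD0; have [C [mC CD /andP[C0 CD0]]] := total_mass_non_atomic mD nuD0.
have mDC : measurable (D `\` C) by exact: measurableD.
have nuDC : nu (D `\` C) = nu D - nu C by rewrite total_massD.
have [C_small|C_large] := leP (2 * nu C) (nu D); first by exists C.
exists (D `\` C); rewrite nuDC.
by split; [exact: mDC | exact: subDsetl | rewrite subr_gt0 | move: C_large; lra].
Qed.

Lemma total_mass_small D eps : measurable D -> 0 < nu D -> 0 < eps ->
  exists C, [/\ measurable C, C `<=` D, 0 < nu C & nu C <= eps].
Proof.
move=> mD nuD0 eps0.
have halving n : exists C, [/\ measurable C, C `<=` D, 0 < nu C & 2 ^+ n * nu C <= nu D].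
  elim: n => [|n [C [mC CD C0 CnD]]]; first by exists D; rewrite expr0 mul1r; split.
  have [C' [mC' C'C C'0 C'C2]] := total_mass_halve mC C0.
  exists C'; split => //; first exact: subset_trans C'C CD.
  by rewrite exprSr -mulrA; apply: le_trans CnD; rewrite ler_pM2l ?exprn_gt0.
pose n := Num.Def.archi_bound (nu D / eps).
have [C [mC CD C0 CnD]] := halving n.
exists C; split => //; rewrite -(ler_pM2l (exprn_gt0 n (ltr0Sn R 1))).
apply: le_trans CnD _; rewrite -ler_pdivrMr // ltW //.
apply: lt_le_trans (archi_boundP _) _; first by rewrite divr_ge0 ?ltW.
by rewrite -natrX ler_nat ltnW // ltn_expl.
Qed.

End total_mass.

Section exhaustion.
Context d (T : measurableType d) (R : realType) (I : finType).
Variable mu : I -> {finite_measure set T -> \bar R}.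
Hypothesis mu_non_atomic : forall i, non_atomic (mu i).
Local Notation nu := (total_mass mu).
Variables (A : set T) (J : {set I}) (c : I -> R).
Hypothesis mA : measurable A.
Hypothesis c_ge0 : forall j, j \in J -> 0 <= c j.
Implicit Types B C : set T.

Definition feasible B :=
  [/\ measurable B, B `<=` A & forall j, j \in J -> fine (mu j B) <= c j].

Definition admissible B C :=
  [/\ measurable C, C `<=` A `\` B & forall j, j \in J -> fine (mu j B) + nu C <= c j].

Lemma feasible0 : feasible set0.
Proof.
split; [exact: measurable0 | exact: sub0set | move=> j Jj].
by rewrite fine_measure0; exact: c_ge0.
Qed.

Lemma admissible0 B : feasible B -> admissible B set0.
Proof.
case=> _ _ Bc; split; [exact: measurable0 | exact: sub0set | move=> j Jj].
by rewrite total_mass0 addr0; exact: Bc.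
Qed.

Lemma admissible_disjoint B C : admissible B C -> B `&` C = set0.
Proof. by case=> _ CAB _; apply/seteqP; split=> x // [Bx /CAB[_]]. Qed.

Lemma feasibleU B C : feasible B -> admissible B C -> feasible (B `|` C).
Proof.
move=> [mB BA Bc] BC; have [mC CAB BCc] := BC.
split; first exact: measurableU.
  by move=> x [/BA //|/CAB[]].
move=> j Jj; rewrite fine_measureU ?(admissible_disjoint BC) //.
by apply: le_trans (BCc j Jj); rewrite lerD2l fine_measure_le_total_mass.
Qed.

Lemma admissible_sub B B' C : feasible B' -> B' `<=` B -> feasible B ->
  admissible B C -> admissible B' C.
Proof.
move=> [mB' _ _] B'B [mB _ _] [mC CAB BCc]; split=> [//|x /CAB[Ax nBx]|j Jj].
  by split=> // /B'B.
by apply: le_trans (BCc j Jj); rewrite lerD2r fine_le_measure.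
Qed.

Lemma greedy_step B : feasible B ->
  exists C, admissible B C /\ forall C', admissible B C' -> nu C' <= 2 * nu C.
Proof.
move=> fB; pose E := nu @` admissible B.
have supE : has_sup E.
  split; first by exists 0, set0; [exact: admissible0 | exact: total_mass0].
  exists (nu A) => _ [C [mC CAB _] <-].
  by apply: le_total_mass => //; apply: subset_trans CAB (@subDsetl _ _ _).
have le_sup C' : admissible B C' -> nu C' <= sup E.
  by move=> BC'; apply: sup_upper_bound => //; exists C'.
have [sup_gt0|sup_le0] := ltP 0 (sup E).
  have [_ [C BC <-] supC] := sup_adherent (divr_gt0 sup_gt0 (ltr0Sn R 1)) supE.
  exists C; split=> // C' /le_sup; move: supC; lra.
exists set0; split; first exact: admissible0.
by move=> C' /le_sup; rewrite total_mass0 mulr0 => /le_trans; apply.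
Qed.

Lemma feasible_bigcup (B : (set T)^nat) : nondecreasing_seq B ->
  (forall n, feasible (B n)) -> feasible (\bigcup_n B n).
Proof.
move=> ndB fB; have mB n : measurable (B n) by case: (fB n).
have mUB : measurable (\bigcup_n B n) by exact: bigcupT_measurable.
split=> [//|x [n _]|j Jj]; first by case: (fB n) => _ + _; apply.
have cvg_mu := @nondecreasing_cvg_mu _ _ _ (mu j) _ mB mUB ndB.
rewrite -lee_fin -fine_measureE // -(cvg_lim _ cvg_mu) //.
apply: lime_le; first by apply/cvg_ex; exists (mu j (\bigcup_n B n)).
apply: nearW => n /=; case: (fB n) => _ _ /(_ j Jj).
by rewrite (fine_measureE _ (mB n)) lee_fin.
Qed.

Lemma maximal_feasible :
  exists B, feasible B /\ forall C, admissible B C -> nu C <= 0.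
Proof.
have /choice[next nextP] : forall B, exists C, feasible B ->
    admissible B C /\ forall C', admissible B C' -> nu C' <= 2 * nu C.
  move=> B; case: (pselect (feasible B)) => [/greedy_step[C ?]|nfB].
    by exists C.
  by exists set0 => /nfB.
pose B n := iter n (fun B => B `|` next B) set0.
have fB n : feasible (B n).
  elim: n => [|n IH]; first exact: feasible0.
  exact: feasibleU IH (nextP _ IH).1.
have nuB n : nu (B n.+1) = nu (B n) + nu (next (B n)).
  have [mBn _ _] := fB n; have BnC := (nextP _ (fB n)).1.
  by rewrite total_massU ?(admissible_disjoint BnC) //; case: BnC.
have ndB : nondecreasing_seq B.
  by apply/nondecreasing_seqP => n; rewrite subsetEset; exact: subsetUl.
have fUB := feasible_bigcup ndB fB.
exists (\bigcup_n B n); split=> // C UBC.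
apply: (@le0_of_linear_bound _ _ (2 * nu A)) => n.
(* [C] is admissible at every stage, so every stage gains at least [nu C / 2]. *)
have : n%:R * nu C <= 2 * nu (B n).
  elim: n => [|n IH]; first by rewrite mul0r total_mass0 mulr0.
  rewrite nuB -natr1 mulrDl mul1r mulrDr lerD //.
  apply: (nextP _ (fB n)).2; apply: admissible_sub UBC => //; exact: bigcup_sup.
move/le_trans; apply; rewrite ler_pM2l //.
by case: (fB n) => mBn BnA _; exact: le_total_mass.
Qed.

Lemma exists_tight_feasible j0 : j0 \in J -> c j0 <= fine (mu j0 A) ->
  exists B l, [/\ feasible B, l \in J & fine (mu l B) = c l].
Proof.
move=> Jj0 cj0; have [B [fB maxB]] := maximal_feasible.
have [mB BA Bc] := fB.
case: (pselect (exists2 l, l \in J & c l <= fine (mu l B))) => [[l Jl cl]|not_tight].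
  by exists B, l; split=> //; apply/le_anti; rewrite cl Bc.
have slack j : j \in J -> fine (mu j B) < c j.
  by move=> Jj; rewrite ltNge; apply/negP => cj; apply: not_tight; exists j.
pose eps := \big[Num.min/1]_(j in J) (c j - fine (mu j B)).
have eps_gt0 : 0 < eps by apply: lt_bigmin => // j Jj; rewrite subr_gt0 slack.
have eps_le j : j \in J -> eps <= c j - fine (mu j B).
  by move=> Jj; apply: bigmin_le_cond.
have mAB : measurable (A `\` B) by exact: measurableD.
have nuAB : 0 < nu (A `\` B).
  apply: lt_le_trans (fine_measure_le_total_mass mu j0 _).
  by rewrite fine_measureD // subr_gt0; apply: lt_le_trans (slack _ Jj0) cj0.
have [C [mC CAB C_gt0 C_le]] := total_mass_small mu_non_atomic mAB nuAB eps_gt0.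
suff : nu C <= 0 by rewrite leNgt C_gt0.
apply: maxB; split=> // j Jj; rewrite addrC -lerBrDr.
exact: le_trans C_le (eps_le j Jj).
Qed.

End exhaustion.

Section sequential_division.
Context d (T : measurableType d) (R : realType) (I : finType).
Variable mu : I -> {finite_measure set T -> \bar R}.

(* [L k] and [P k] are the paper's l_(k+1) and R^(k+1); indices from #|J| on
   are irrelevant. *)
Definition sequential_division (A : set T) (J : {set I}) (c : I -> R)
    (L : nat -> I) (P : nat -> set T) :=
  [/\ forall k, (k < #|J|)%N -> [/\ L k \in J, measurable (P k) & P k `<=` A],
      forall k k', (k < k' < #|J|)%N -> L k != L k' /\ P k `&` P k' = set0,
      forall k, (k < #|J|)%N -> fine (mu (L k) (P k)) = c (L k)
    & forall k k', (k < k' < #|J|)%N -> fine (mu (L k') (P k)) <= c (L k')].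

Lemma sequential_division_cons (A B : set T) (J : {set I}) (c : I -> R) l L P :
  feasible mu A J c B -> l \in J -> fine (mu l B) = c l ->
  sequential_division (A `\` B) (J :\ l) c L P ->
  sequential_division A J c (fun k => if k is k'.+1 then L k' else l)
                            (fun k => if k is k'.+1 then P k' else B).
Proof.
move=> [mB BA Bc] Jl Bl [PAB LP Pc Pfeas].
have cardJ : #|J| = #|J :\ l|.+1 by rewrite (cardsD1 l J) Jl.
rewrite /sequential_division cardJ; split.
- case=> [|k] /= k_lt; first by split.
  have [/setD1P[_ JLk] mPk PkAB] := PAB k k_lt; split=> //.
  by move=> x /PkAB[].
- case=> [|k] [|k'] //= k_lt; last exact: LP.
  have [/setD1P[Lk'l _] _ PkAB] := PAB k' k_lt; split; first by rewrite eq_sym.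
  by apply/seteqP; split=> x // [Bx /PkAB[_]].
- by case=> [|k] /= k_lt; [exact: Bl | exact: Pc].
- case=> [|k] [|k'] //= k_lt; last exact: Pfeas.
  by apply: Bc; have [/setD1P[_ ->]] := PAB k' k_lt.
Qed.

Hypothesis mu_non_atomic : forall i, non_atomic (mu i).

Lemma exists_sequential_division (A : set T) (J : {set I}) (c : I -> R) :
  measurable A ->
  (forall j, j \in J -> 0 <= c j) ->
  (forall j, j \in J -> #|J|%:R * c j <= fine (mu j A)) -> (0 < #|J|)%N ->
  exists L P, sequential_division A J c L P.
Proof.
move: {2}#|J| (erefl #|J|) => n.
elim: n J A => [|n IH] J A cardJ mA c_ge0 share J0.
  by rewrite cardJ in J0.
have [j0 Jj0] := card_gt0P J0.
have cj0 : c j0 <= fine (mu j0 A).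
  by apply: le_trans (share j0 Jj0); rewrite cardJ ler_peMl ?c_ge0 ?ler1n.
have [B [l [fB Jl Bl]]] := exists_tight_feasible mu_non_atomic mA c_ge0 Jj0 cj0.
have [mB BA Bc] := fB.
have cardJl : #|J :\ l| = n by move: cardJ; rewrite (cardsD1 l J) Jl => -[].
have share_l j : j \in J :\ l -> #|J :\ l|%:R * c j <= fine (mu j (A `\` B)).
  move=> /setD1P[_ Jj]; rewrite cardJl fine_measureD //.
  by move: (share j Jj) (Bc j Jj); rewrite cardJ -natr1; lra.
have [L [P divP]] : exists L P, sequential_division (A `\` B) (J :\ l) c L P.
  have [n0|n_gt0] := posnP n.
    exists (fun=> l), (fun=> set0); rewrite /sequential_division cardJl n0.
    by split=> [k|k k'|k|k k']; rewrite ?ltn0 ?andbF.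
  apply: (IH _ _ cardJl _ _ share_l); [exact: measurableD | | by rewrite cardJl].
  by move=> j /setD1P[_ /c_ge0].
by do 2!eexists; exact: sequential_division_cons divP.
Qed.

End sequential_division.

Theorem lemma9 (d : measure_display) (M : measurableType d) (R : realType)
  (r : nat) (hr : (0 < r)%N)
  (mu : 'I_r -> {finite_measure set M -> \bar R})
  (hna : forall i, non_atomic (mu i))
  (S : set M) (mS : measurable S)
  (hS : (\prod_(i < r) mu i S)%E != 0%E) :
  exists (Rs : 'I_r -> set M) (l : {perm 'I_r}),
    [/\ forall k, measurable (Rs k) /\ Rs k `<=` S,
        forall k k', k != k' -> Rs k `&` Rs k' = set0,
        forall k, mu (l k) (Rs k) = (((r%:R)^-1)%:E * mu (l k) S)%E
      & forall k j : 'I_r, (k < j)%N -> (mu (l j) (Rs k) <= ((r%:R)^-1)%:E * mu (l j) S)%E].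
Proof.
pose c j := r%:R^-1 * fine (mu j S).
have cardT : #|[set: 'I_r]%SET| = r by rewrite cardsT card_ord.
have [L [P]] : exists L P, sequential_division mu S [set: 'I_r]%SET c L P.
  apply: exists_sequential_division => // [j _|j _|].
  - by rewrite mulr_ge0 ?invr_ge0 ?ler0n ?fine_measure_ge0.
  - by rewrite cardT /c mulrA mulfV ?mul1r // pnatr_eq0 -lt0n.
  - by rewrite cardT.
rewrite /sequential_division cardT => -[PS LP Pc Pfeas].
have LP_sym (k k' : 'I_r) : k != k' -> L k != L k' /\ P k `&` P k' = set0.
  rewrite neq_ltn => /orP[kk'|k'k]; first by apply: LP; rewrite kk' ltn_ord.
  by rewrite eq_sym setIC; apply: LP; rewrite k'k ltn_ord.
have L_inj : injective (fun k : 'I_r => L k).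
  by move=> k k' /eqP; apply: contraTeq => /LP_sym[].
exists (fun k : 'I_r => P k), (perm L_inj); split.
- by move=> k; have [_ ? ?] := PS k (ltn_ord k).
- by move=> k k' /LP_sym[].
- move=> k; rewrite permE; have [_ mPk _] := PS k (ltn_ord k).
  by rewrite fine_measureE // Pc // (fine_measureE _ mS) EFinM.
- move=> k j kj; rewrite permE; have [_ mPk _] := PS k (ltn_ord k).
  rewrite fine_measureE // (fine_measureE _ mS) -EFinM lee_fin.
  by apply: Pfeas; rewrite kj ltn_ord.
Qed.
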